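(* Let $A, B$ be groups, $H\le A$, $K\le B$ subgroups, and $\phi: H\to K$ an isomorphism. The following are equivalent: (i) there exist an $H$-filtration of $A$ and a $K$-filtration of $B$ which are $(H, K, \phi)$-compatible; (ii) for any $a_1, \ldots, a_n\in A\setminus H$, $b_1, \ldots, b_m\in B\setminus K$, $h_1, \ldots, h_l\in H$ and $k_1, \ldots, k_s\in K$ there exist surjective homomorphisms $f^A: A \to G^A$, $f^B: B \to G^B$ onto finite groups such that $f^A(h) \mapsto f^B(\phi(h))$ ($h\in H$) is a well-defined isomorphism $f^A(H)\to f^B(K)$, and 1) $f^A(a_i)\notin f^A(H)$ for all $i=1, \ldots, n$; 2) $f^B(b_i)\notin f^B(K)$ for all $i=1, \ldots, m$; 3) $f^A(h_i)\neq f^A(h_j)$ whenever $h_i\ne h_j$, $1\le i,j\le l$; 4) $f^B(k_i)\neq f^B(k_j)$ whenever $k_i\ne k_j$, $1\le i,j\le s$.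
   Context: A filtration of a group $A$ is a family $\{A_\lambda\}_{\lambda\in\Lambda}$ of normal finite-index subgroups with $\bigcap A_\lambda=\{e\}$; it is an $H$-filtration if $\bigcap_\lambda HA_\lambda=H$. An $H$-filtration $\{A_\lambda\}$ of $A$ and a $K$-filtration $\{B_\lambda\}$ of $B$ with the same index set are $(H,K,\phi)$-compatible if for each $\lambda$ the map $hA_\lambda\mapsto\phi(h)B_\lambda$ is well defined and an isomorphism $HA_\lambda/A_\lambda\to KB_\lambda/B_\lambda$. *)

From Stdlib Require Import List.

Record group := Group {
  carrier :> Type;
  gmul : carrier -> carrier -> carrier;
  ginv : carrier -> carrier;
  gone : carrier;
  gmulA : forall x y z, gmul x (gmul y z) = gmul (gmul x y) z;
  gmul1l : forall x, gmul gone x = x;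
  gmulVl : forall x, gmul (ginv x) x = gone
}.

Arguments gmul {g}.
Arguments ginv {g}.
Arguments gone {g}.

Definition subgroup {G : group} (H : G -> Prop) : Prop :=
  H gone /\ (forall x y, H x -> H y -> H (gmul x y)) /\ (forall x, H x -> H (ginv x)).

Definition normal_subgroup {G : group} (N : G -> Prop) : Prop :=
  subgroup N /\ forall g n, N n -> N (gmul (gmul g n) (ginv g)).

Definition finite_index {G : group} (N : G -> Prop) : Prop :=
  exists reps : list G, forall a : G, exists r, In r reps /\ N (gmul (ginv r) a).

Definition finite_group (G : group) : Prop :=
  exists s : list G, forall x : G, In x s.

Definition group_hom {G G' : group} (f : G -> G') : Prop :=
  forall x y, f (gmul x y) = gmul (f x) (f y).

(* phi : H -> K is an isomorphism (phi given as a map A -> B, only its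
   values on H matter) *)
Definition subgroup_iso {A B : group} (H : A -> Prop) (K : B -> Prop)
  (phi : A -> B) : Prop :=
  (forall h, H h -> K (phi h)) /\
  (forall h h', H h -> H h' -> phi (gmul h h') = gmul (phi h) (phi h')) /\
  (forall h h', H h -> H h' -> phi h = phi h' -> h = h') /\
  (forall k, K k -> exists h, H h /\ phi h = k).

Definition filtration {A : group} {Lam : Type} (N : Lam -> A -> Prop) : Prop :=
  (forall l, normal_subgroup (N l) /\ finite_index (N l)) /\
  (forall a, (forall l, N l a) -> a = gone).

Definition in_prod {A : group} (H N : A -> Prop) (a : A) : Prop :=
  exists h n, H h /\ N n /\ a = gmul h n.

Definition H_filtration {A : group} (H : A -> Prop) {Lam : Type}
  (N : Lam -> A -> Prop) : Prop :=
  filtration N /\ (forall a, (forall l, in_prod H (N l) a) <-> H a).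

Definition same_coset {A : group} (N : A -> Prop) (x y : A) : Prop :=
  N (gmul (ginv x) y).

(* (H,K,phi)-compatibility: for each l, the map h A_l |-> phi(h) B_l is
   well defined and is an isomorphism H A_l / A_l -> K B_l / B_l. *)
Definition compatible {A B : group} (H : A -> Prop) (K : B -> Prop)
  (phi : A -> B) {Lam : Type} (NA : Lam -> A -> Prop) (NB : Lam -> B -> Prop)
  : Prop :=
  forall l,
    (forall h h', H h -> H h' -> same_coset (NA l) h h' ->
        same_coset (NB l) (phi h) (phi h')) /\
    (forall h h', H h -> H h' ->
        same_coset (NB l) (phi (gmul h h')) (gmul (phi h) (phi h'))) /\
    (forall h h', H h -> H h' -> same_coset (NB l) (phi h) (phi h') ->
        same_coset (NA l) h h') /\
    (forall k, K k -> exists h, H h /\ same_coset (NB l) (phi h) k).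

(* (i) => (ii): only finitely many levels of the filtrations are needed to
   separate finitely many elements, so intersecting these levels gives a
   single compatible pair of finite-index normal subgroups, and the quotient
   maps by this pair do the job.
   (ii) => (i): index the filtrations by all compatible pairs of finite
   quotients; their kernels form compatible H- and K-filtrations, because
   (ii) applied to one-element and two-element lists separates any element
   outside H (resp. K) from H (resp. K) and any nontrivial element from 1. *)

From Pilot Require Import Defs.
From Stdlib Require Import List Classical ClassicalEpsilon FunctionalExtensionality
  PropExtensionality ProofIrrelevance.

Arguments gmulA {g} x y z.
Arguments gmul1l {g} x.
Arguments gmulVl {g} x.

Section GroupLaws.

Context {G : group}.
Implicit Types x y : G.

Lemma gmulKl x y : gmul (ginv x) (gmul x y) = y.
Proof. rewrite gmulA, gmulVl, gmul1l. reflexivity. Qed.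

(* Only left-sided axioms are given: [x * x^-1] is idempotent, hence trivial. *)
Lemma gmulVr x : gmul x (ginv x) = gone.
Proof.
  assert (E : gmul (gmul x (ginv x)) (gmul x (ginv x)) = gmul x (ginv x))
    by (rewrite <- (gmulA x (ginv x)), gmulKl; reflexivity).
  rewrite <- (gmulKl (gmul x (ginv x)) (gmul x (ginv x))), E, gmulVl. reflexivity.
Qed.

Lemma gmul1r x : gmul x gone = x.
Proof. rewrite <- (gmulVl x), gmulA, gmulVr, gmul1l. reflexivity. Qed.

Lemma gmulKr x y : gmul x (gmul (ginv x) y) = y.
Proof. rewrite gmulA, gmulVr, gmul1l. reflexivity. Qed.

Lemma ginv_unique x y : gmul x y = gone -> x = ginv y.
Proof. intro E. rewrite <- (gmul1r x), <- (gmulVr y), gmulA, E, gmul1l. reflexivity. Qed.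

Lemma ginvK x : ginv (ginv x) = x.
Proof. symmetry. apply ginv_unique, gmulVr. Qed.

Lemma ginvM x y : ginv (gmul x y) = gmul (ginv y) (ginv x).
Proof. symmetry. apply ginv_unique. rewrite <- gmulA, gmulKl, gmulVl. reflexivity. Qed.

Lemma ginv1 : ginv (@gone G) = gone.
Proof. symmetry. apply ginv_unique, gmul1l. Qed.

Lemma gdiv_eq1 x y : gmul (ginv x) y = gone <-> x = y.
Proof.
  split; intro E.
  - rewrite <- (gmulKr x y), E, gmul1r. reflexivity.
  - rewrite E. apply gmulVl.
Qed.

End GroupLaws.

Global Hint Rewrite <- @gmulA : group.
Global Hint Rewrite @gmul1l @gmul1r @gmulVl @gmulVr @gmulKl @gmulKr @ginvK @ginvM @ginv1 : group.

Section Homomorphisms.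

Context {G G' : group} {f : G -> G'}.
Hypothesis hom_f : group_hom f.

Lemma hom_one : f gone = gone.
Proof.
  assert (E : gmul (f gone) (f gone) = f gone) by (rewrite <- hom_f, gmul1l; reflexivity).
  rewrite <- (gmulKl (f gone) (f gone)), E, gmulVl. reflexivity.
Qed.

Lemma hom_inv x : f (ginv x) = ginv (f x).
Proof. apply ginv_unique. rewrite <- hom_f, gmulVl. exact hom_one. Qed.

Lemma hom_eq_iff x y : f (gmul (ginv x) y) = gone <-> f x = f y.
Proof. rewrite hom_f, hom_inv. apply gdiv_eq1. Qed.

Lemma kernel_normal : normal_subgroup (fun x => f x = gone).
Proof.
  split; [split; [|split]|].
  - exact hom_one.
  - intros x y Hx Hy. rewrite hom_f, Hx, Hy, gmul1l. reflexivity.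
  - intros x Hx. rewrite hom_inv, Hx, ginv1. reflexivity.
  - intros g n Hn. rewrite !hom_f, Hn, gmul1r, hom_inv, gmulVr. reflexivity.
Qed.

End Homomorphisms.

Section Cosets.

Context {A : group} {N : A -> Prop}.
Hypothesis sub_N : subgroup N.

Lemma same_coset_refl x : same_coset N x x.
Proof. unfold same_coset. rewrite gmulVl. apply sub_N. Qed.

Lemma same_coset_sym x y : same_coset N x y -> same_coset N y x.
Proof.
  unfold same_coset. intro Hxy.
  replace (gmul (ginv y) x) with (ginv (gmul (ginv x) y))
    by (autorewrite with group; reflexivity).
  apply sub_N, Hxy.
Qed.

Lemma same_coset_trans x y z :
  same_coset N x y -> same_coset N y z -> same_coset N x z.
Proof.
  unfold same_coset. intros Hxy Hyz.
  replace (gmul (ginv x) z) with (gmul (gmul (ginv x) y) (gmul (ginv y) z))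
    by (autorewrite with group; reflexivity).
  apply sub_N; assumption.
Qed.

End Cosets.

Lemma same_coset_mul {A : group} (N : A -> Prop) (x x' y y' : A) :
  normal_subgroup N -> same_coset N x x' -> same_coset N y y' ->
  same_coset N (gmul x y) (gmul x' y').
Proof.
  unfold same_coset. intros [sub_N conj_N] Hx Hy.
  replace (gmul (ginv (gmul x y)) (gmul x' y')) with
    (gmul (gmul (gmul (ginv y) (gmul (ginv x) x')) (ginv (ginv y))) (gmul (ginv y) y'))
    by (autorewrite with group; reflexivity).
  apply sub_N; auto.
Qed.

Lemma finite_choice {X Y : Type} (Q : X -> Prop) (R : X -> Y -> Prop) (xs : list X) :
  (forall x, In x xs -> Q x -> exists y, R x y) ->
  exists ys, forall x, In x xs -> Q x -> exists y, In y ys /\ R x y.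
Proof.
  induction xs as [|x xs IH]; intro Hxs.
  - exists nil. intros x [].
  - destruct IH as [ys Hys]; [intros x' Hx'; apply Hxs; right; exact Hx'|].
    destruct (classic (Q x)) as [Qx|nQx].
    + destruct (Hxs x (or_introl eq_refl) Qx) as [y Hy].
      exists (y :: ys). intros x' [<-|Hx'] Qx'.
      * exists y. split; [left; reflexivity | exact Hy].
      * destruct (Hys x' Hx' Qx') as [y' [Hy' R']]. exists y'. split; [right|]; assumption.
    + exists ys. intros x' [<-|Hx'] Qx'; [contradiction | exact (Hys x' Hx' Qx')].
Qed.

Lemma factor_through {X Y Z : Type} (x0 : X) (P : X -> Prop) (f : X -> Y) (g : X -> Z) :
  (forall x x', P x -> P x' -> f x = f x' -> g x = g x') ->
  exists psi : Y -> Z, forall x, P x -> psi (f x) = g x.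
Proof.
  intro Hg. exists (fun y => g (epsilon (inhabits x0) (fun x => P x /\ f x = y))).
  intros x Px.
  destruct (epsilon_spec (inhabits x0) (fun x' => P x' /\ f x' = f x)) as [Px' E];
    [exists x; split; auto|].
  apply Hg; assumption.
Qed.

Section FiniteIndex.

Context {A : group}.

Lemma finite_index_ext (N N' : A -> Prop) :
  (forall a, N a <-> N' a) -> finite_index N -> finite_index N'.
Proof.
  intros E [reps Hreps]. exists reps. intro a.
  destruct (Hreps a) as [r [Hr Ha]]. exists r. split; [exact Hr | apply E, Ha].
Qed.

Lemma finite_index_inter (N1 N2 : A -> Prop) :
  subgroup N1 -> subgroup N2 -> finite_index N1 -> finite_index N2 ->
  finite_index (fun a => N1 a /\ N2 a).
Proof.
  intros sub1 sub2 [R1 F1] [R2 F2].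
  destruct (finite_choice
              (fun p => exists a, same_coset N1 (fst p) a /\ same_coset N2 (snd p) a)
              (fun p c => same_coset N1 (fst p) c /\ same_coset N2 (snd p) c)
              (list_prod R1 R2)) as [cs Hcs].
  { intros p _ Hp. exact Hp. }
  exists cs. intro a.
  destruct (F1 a) as [r [Hr Hra]], (F2 a) as [s [Hs Hsa]].
  destruct (Hcs (r, s)) as [c [Hc [Hrc Hsc]]];
    [apply in_prod; assumption | exists a; split; assumption |].
  exists c. split; [exact Hc|]. split.
  - apply same_coset_trans with r; [|apply same_coset_sym|]; assumption.
  - apply same_coset_trans with s; [|apply same_coset_sym|]; assumption.
Qed.

Lemma kernel_finite_index {G : group} (f : A -> G) :
  group_hom f -> finite_group G -> (forall y, exists x, f x = y) ->
  finite_index (fun x => f x = gone).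
Proof.
  intros hom_f [ys Hys] surj_f.
  destruct (finite_choice (fun _ => True) (fun y x => f x = y) ys) as [xs Hxs].
  { intros y _ _. apply surj_f. }
  exists xs. intro a.
  destruct (Hxs (f a) (Hys _) I) as [r [Hr E]].
  exists r. split; [exact Hr | apply hom_eq_iff; assumption].
Qed.

End FiniteIndex.

Section Quotient.

Context {A : group} (N : A -> Prop).
Hypothesis normal_N : normal_subgroup N.
Let sub_N : subgroup N := proj1 normal_N.

(* The inhabitant is fixed so that [coset_rep a] depends on [a] only through its coset. *)
Definition coset_rep (a : A) : A := epsilon (inhabits gone) (same_coset N a).

Lemma coset_rep_spec a : same_coset N a (coset_rep a).
Proof. unfold coset_rep. apply epsilon_spec. exists a. apply same_coset_refl, sub_N. Qed.

Lemma coset_rep_eq a b : same_coset N a b -> coset_rep a = coset_rep b.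
Proof.
  intro Hab. unfold coset_rep. f_equal.
  extensionality c. apply propositional_extensionality. split; intro Hc.
  - apply same_coset_trans with a; [apply sub_N | | exact Hc].
    apply same_coset_sym, Hab. apply sub_N.
  - apply same_coset_trans with b; [apply sub_N | exact Hab | exact Hc].
Qed.

Lemma coset_rep_idem a : coset_rep (coset_rep a) = coset_rep a.
Proof. apply coset_rep_eq, same_coset_sym, coset_rep_spec. exact sub_N. Qed.

Definition quotient_carrier : Type := {a : A | coset_rep a = a}.

Definition qproj (a : A) : quotient_carrier := exist _ (coset_rep a) (coset_rep_idem a).

Lemma qproj_eq a b : qproj a = qproj b <-> same_coset N a b.
Proof.
  split; intro Hab.
  - assert (E : coset_rep a = coset_rep b) by exact (f_equal (@proj1_sig _ _) Hab).
    apply same_coset_trans with (coset_rep a); [exact sub_N | apply coset_rep_spec|].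
    rewrite E. apply same_coset_sym, coset_rep_spec. exact sub_N.
  - apply subset_eq_compat, coset_rep_eq, Hab.
Qed.

Lemma qproj_val (x : quotient_carrier) : qproj (proj1_sig x) = x.
Proof. destruct x as [a Ha]. apply subset_eq_compat, Ha. Qed.

Definition qmul (x y : quotient_carrier) : quotient_carrier :=
  qproj (gmul (proj1_sig x) (proj1_sig y)).

Definition qinv (x : quotient_carrier) : quotient_carrier := qproj (ginv (proj1_sig x)).

Lemma qmul_proj a b : qmul (qproj a) (qproj b) = qproj (gmul a b).
Proof.
  apply qproj_eq, same_coset_mul; [exact normal_N | |];
    apply same_coset_sym, coset_rep_spec; exact sub_N.
Qed.

Lemma qmulA x y z : qmul x (qmul y z) = qmul (qmul x y) z.
Proof.
  rewrite <- (qproj_val x), <- (qproj_val y), <- (qproj_val z), !qmul_proj, gmulA.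
  reflexivity.
Qed.

Lemma qmul1l x : qmul (qproj gone) x = x.
Proof. rewrite <- (qproj_val x), qmul_proj, gmul1l. reflexivity. Qed.

Lemma qmulVl x : qmul (qinv x) x = qproj gone.
Proof.
  unfold qinv. rewrite <- (qproj_val x) at 2. rewrite qmul_proj, gmulVl. reflexivity.
Qed.

Definition quotient : group :=
  Group quotient_carrier qmul qinv (qproj gone) qmulA qmul1l qmulVl.

Definition quotient_map (a : A) : quotient := qproj a.

Lemma quotient_map_eq a b : quotient_map a = quotient_map b <-> same_coset N a b.
Proof. apply qproj_eq. Qed.

Lemma quotient_map_hom : group_hom quotient_map.
Proof. intros a b. symmetry. apply qmul_proj. Qed.

Lemma quotient_map_surj (x : quotient) : exists a, quotient_map a = x.
Proof. exists (proj1_sig x). apply qproj_val. Qed.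

Lemma quotient_finite : finite_index N -> finite_group quotient.
Proof.
  intros [reps Hreps]. exists (map qproj reps). intro x.
  destruct (Hreps (proj1_sig x)) as [r [Hr Hrx]].
  rewrite <- (qproj_val x), <- (proj2 (qproj_eq r _) Hrx).
  apply in_map, Hr.
Qed.

End Quotient.

Definition inter_family {A : group} {Lam : Type} (N : Lam -> A -> Prop) (ls : list Lam)
  (a : A) : Prop :=
  forall l, In l ls -> N l a.

Section FiniteIntersections.

Context {A : group} {Lam : Type} (N : Lam -> A -> Prop).
Hypothesis normal_N : forall l, normal_subgroup (N l).

Lemma inter_family_normal ls : normal_subgroup (inter_family N ls).
Proof.
  split; [split; [|split]|]; unfold inter_family.
  - intros l _. apply normal_N.
  - intros x y Hx Hy l Hl. apply normal_N; auto.
  - intros x Hx l Hl. apply normal_N; auto.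
  - intros g n Hn l Hl. apply normal_N; auto.
Qed.

Lemma inter_family_finite_index ls :
  (forall l, finite_index (N l)) -> finite_index (inter_family N ls).
Proof.
  intro fin_N. induction ls as [|l ls IH].
  - exists (gone :: nil). intro a. exists gone. split; [left; reflexivity | intros l []].
  - apply finite_index_ext with (fun a => N l a /\ inter_family N ls a).
    + intro a. split.
      * intros [Hl Hls] l' [<-|Hl']; auto.
      * intro Hall. split; [apply Hall; left; reflexivity|].
        intros l' Hl'. apply Hall. right. exact Hl'.
    + apply finite_index_inter; auto; [apply normal_N | apply inter_family_normal].
Qed.

End FiniteIntersections.

Definition separated_by {A : group} (H N : A -> Prop) (as_ hs : list A) : Prop :=
  (forall a, In a as_ -> ~ Defs.in_prod H N a) /\
  (forall h h', In h hs -> In h' hs -> h <> h' -> ~ same_coset N h h').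

Lemma H_filtration_separated {A : group} (H : A -> Prop) {Lam : Type}
  (N : Lam -> A -> Prop) (as_ hs : list A) :
  H_filtration H N -> (forall a, In a as_ -> ~ H a) ->
  exists ls, forall ls', incl ls ls' -> separated_by H (inter_family N ls') as_ hs.
Proof.
  intros [[_ trivial_N] prod_N] not_H.
  destruct (finite_choice (fun _ => True) (fun a l => ~ Defs.in_prod H (N l) a) as_)
    as [ls1 L1].
  { intros a Ha _. apply not_all_ex_not. intro Hall. exact (not_H a Ha (proj1 (prod_N a) Hall)). }
  destruct (finite_choice (fun p => fst p <> snd p)
              (fun p l => ~ same_coset (N l) (fst p) (snd p)) (list_prod hs hs)) as [ls2 L2].
  { intros [h h'] _ ne. apply not_all_ex_not. intro Hall.
    apply ne, gdiv_eq1, trivial_N, Hall. }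
  exists (ls1 ++ ls2). intros ls' incl_ls. split.
  - intros a Ha (h & n & Hh & Hn & ->).
    destruct (L1 _ Ha I) as [l [Hl not_prod]].
    apply not_prod. exists h, n. split; [exact Hh|]. split; [|reflexivity].
    apply Hn, incl_ls, in_or_app. left. exact Hl.
  - intros h h' Hh Hh' ne Hhh'.
    destruct (L2 (h, h') (in_prod _ _ _ _ Hh Hh') ne) as [l [Hl not_coset]].
    apply not_coset, Hhh', incl_ls, in_or_app. right. exact Hl.
Qed.

Definition compatible_at {A B : group} (H : A -> Prop) (K : B -> Prop) (phi : A -> B)
  (NA : A -> Prop) (NB : B -> Prop) : Prop :=
  (forall h h', H h -> H h' -> same_coset NA h h' -> same_coset NB (phi h) (phi h')) /\
  (forall h h', H h -> H h' -> same_coset NB (phi (gmul h h')) (gmul (phi h) (phi h'))) /\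
  (forall h h', H h -> H h' -> same_coset NB (phi h) (phi h') -> same_coset NA h h') /\
  (forall k, K k -> exists h, H h /\ same_coset NB (phi h) k).

Lemma compatible_at_inter {A B : group} (H : A -> Prop) (K : B -> Prop) (phi : A -> B)
  {Lam : Type} (NA : Lam -> A -> Prop) (NB : Lam -> B -> Prop) (ls : list Lam) :
  subgroup_iso H K phi -> (forall l, subgroup (NB l)) -> compatible H K phi NA NB ->
  compatible_at H K phi (inter_family NA ls) (inter_family NB ls).
Proof.
  intros (_ & phi_mul & _ & phi_surj) sub_NB compat.
  split; [|split; [|split]].
  - intros h h' Hh Hh' Hhh' l Hl. destruct (compat l) as (wd & _).
    exact (wd h h' Hh Hh' (Hhh' l Hl)).
  - intros h h' Hh Hh' l _. rewrite phi_mul by assumption. apply same_coset_refl, sub_NB.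
  - intros h h' Hh Hh' Hhh' l Hl. destruct (compat l) as (_ & _ & inj & _).
    exact (inj h h' Hh Hh' (Hhh' l Hl)).
  - intros k Hk. destruct (phi_surj k Hk) as [h [Hh <-]].
    exists h. split; [exact Hh|]. intros l _. apply same_coset_refl, sub_NB.
Qed.

Record compatible_quotient {A B : group} (H : A -> Prop) (K : B -> Prop) (phi : A -> B)
  : Type := {
  cqA : group;
  cqB : group;
  cq_projA : A -> cqA;
  cq_projB : B -> cqB;
  cq_iso : cqA -> cqB;
  cq_finiteA : finite_group cqA;
  cq_finiteB : finite_group cqB;
  cq_homA : group_hom cq_projA;
  cq_surjA : forall y, exists a, cq_projA a = y;
  cq_homB : group_hom cq_projB;
  cq_surjB : forall y, exists b, cq_projB b = y;
  cq_iso_proj : forall h, H h -> cq_iso (cq_projA h) = cq_projB (phi h);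
  cq_iso_mul : forall h h', H h -> H h' ->
    cq_iso (gmul (cq_projA h) (cq_projA h')) = gmul (cq_iso (cq_projA h)) (cq_iso (cq_projA h'));
  cq_iso_inj : forall h h', H h -> H h' ->
    cq_iso (cq_projA h) = cq_iso (cq_projA h') -> cq_projA h = cq_projA h';
  cq_iso_surj : forall k, K k -> exists h, H h /\ cq_iso (cq_projA h) = cq_projB k
}.

Arguments cqA {A B H K phi}.
Arguments cqB {A B H K phi}.
Arguments cq_projA {A B H K phi}.
Arguments cq_projB {A B H K phi}.
Arguments cq_iso {A B H K phi}.

Definition separates {A G : group} (H : A -> Prop) (f : A -> G) (as_ hs : list A) : Prop :=
  (forall a, In a as_ -> forall h, H h -> f a <> f h) /\
  (forall h h', In h hs -> In h' hs -> h <> h' -> f h <> f h').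

Lemma separates_of_kernel {A G : group} (H N : A -> Prop) (f : A -> G) (as_ hs : list A) :
  (forall a b, f a = f b <-> same_coset N a b) ->
  separated_by H N as_ hs -> separates H f as_ hs.
Proof.
  intros ker_f [sep_out sep_in]. split.
  - intros a Ha h Hh E. apply (sep_out a Ha).
    exists h, (gmul (ginv h) a). split; [exact Hh|]. split; [|symmetry; apply gmulKr].
    apply ker_f. symmetry. exact E.
  - intros h h' Hh Hh' ne E. exact (sep_in h h' Hh Hh' ne (proj1 (ker_f h h') E)).
Qed.

Lemma compatible_quotient_of_subgroups {A B : group} (H : A -> Prop) (K : B -> Prop)
  (phi : A -> B) (NA : A -> Prop) (NB : B -> Prop) :
  subgroup H -> subgroup_iso H K phi ->
  normal_subgroup NA -> finite_index NA -> normal_subgroup NB -> finite_index NB ->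
  compatible_at H K phi NA NB ->
  exists q : compatible_quotient H K phi,
    (forall a a', cq_projA q a = cq_projA q a' <-> same_coset NA a a') /\
    (forall b b', cq_projB q b = cq_projB q b' <-> same_coset NB b b').
Proof.
  intros sub_H (_ & phi_mul & _ & phi_surj) normal_NA fin_NA normal_NB fin_NB (wd & _ & inj & _).
  destruct (factor_through gone H (quotient_map NA normal_NA)
              (fun h => quotient_map NB normal_NB (phi h))) as [psi psi_proj].
  { intros h h' Hh Hh' E.
    apply quotient_map_eq, wd; [exact Hh | exact Hh' | apply (quotient_map_eq NA normal_NA), E]. }
  assert (psi_mul : forall h h', H h -> H h' ->
            psi (gmul (quotient_map NA normal_NA h) (quotient_map NA normal_NA h')) =
            gmul (psi (quotient_map NA normal_NA h)) (psi (quotient_map NA normal_NA h'))).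
  { intros h h' Hh Hh'.
    assert (Hhh' : H (gmul h h')) by (apply sub_H; assumption).
    rewrite <- quotient_map_hom, !psi_proj, phi_mul, quotient_map_hom by assumption.
    reflexivity. }
  assert (psi_inj : forall h h', H h -> H h' ->
            psi (quotient_map NA normal_NA h) = psi (quotient_map NA normal_NA h') ->
            quotient_map NA normal_NA h = quotient_map NA normal_NA h').
  { intros h h' Hh Hh' E. rewrite !psi_proj in E by assumption.
    apply quotient_map_eq, inj; [exact Hh | exact Hh' | apply (quotient_map_eq NB normal_NB), E]. }
  assert (psi_surj : forall k, K k ->
            exists h, H h /\ psi (quotient_map NA normal_NA h) = quotient_map NB normal_NB k).
  { intros k Hk. destruct (phi_surj k Hk) as [h [Hh <-]].
    exists h. split; [exact Hh | apply psi_proj, Hh]. }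
  exists (Build_compatible_quotient _ _ H K phi _ _ _ _ psi
            (quotient_finite NA normal_NA fin_NA) (quotient_finite NB normal_NB fin_NB)
            (quotient_map_hom NA normal_NA) (quotient_map_surj NA normal_NA)
            (quotient_map_hom NB normal_NB) (quotient_map_surj NB normal_NB)
            psi_proj psi_mul psi_inj psi_surj).
  split; apply quotient_map_eq.
Qed.

Lemma compatible_quotient_of_filtrations {A B : group} (H : A -> Prop) (K : B -> Prop)
  (phi : A -> B) {Lam : Type} (NA : Lam -> A -> Prop) (NB : Lam -> B -> Prop) :
  subgroup H -> subgroup_iso H K phi ->
  H_filtration H NA -> H_filtration K NB -> compatible H K phi NA NB ->
  forall as_ bs hs ks, (forall a, In a as_ -> ~ H a) -> (forall b, In b bs -> ~ K b) ->
  exists q : compatible_quotient H K phi,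
    separates H (cq_projA q) as_ hs /\ separates K (cq_projB q) bs ks.
Proof.
  intros sub_H iso filt_A filt_B compat as_ bs hs ks not_H not_K.
  destruct (H_filtration_separated H NA as_ hs filt_A not_H) as [lsA sep_A].
  destruct (H_filtration_separated K NB bs ks filt_B not_K) as [lsB sep_B].
  destruct filt_A as [[levels_A _] _], filt_B as [[levels_B _] _].
  set (ls := lsA ++ lsB).
  assert (normal_A : forall l, normal_subgroup (NA l)) by (intro l; apply levels_A).
  assert (normal_B : forall l, normal_subgroup (NB l)) by (intro l; apply levels_B).
  assert (fin_A : forall l, finite_index (NA l)) by (intro l; apply levels_A).
  assert (fin_B : forall l, finite_index (NB l)) by (intro l; apply levels_B).
  destruct (compatible_quotient_of_subgroups H K phi _ _ sub_H iso
              (inter_family_normal NA normal_A ls) (inter_family_finite_index NA normal_A ls fin_A)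
              (inter_family_normal NB normal_B ls) (inter_family_finite_index NB normal_B ls fin_B))
    as (q & ker_A & ker_B).
  - apply compatible_at_inter; [exact iso | intro l; apply normal_B | exact compat].
  - exists q. split; eapply separates_of_kernel.
    + exact ker_A.
    + apply sep_A, incl_appl, incl_refl.
    + exact ker_B.
    + apply sep_B, incl_appr, incl_refl.
Qed.

Lemma H_filtration_of_kernels {A : group} (H : A -> Prop) {I : Type} (G : I -> group)
  (f : forall i, A -> G i) :
  subgroup H -> (forall i, finite_group (G i)) -> (forall i, group_hom (f i)) ->
  (forall i y, exists a, f i a = y) ->
  (forall as_ hs, (forall a, In a as_ -> ~ H a) -> (forall h, In h hs -> H h) ->
     exists i, separates H (f i) as_ hs) ->
  H_filtration H (fun i a => f i a = gone).
Proof.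
  intros sub_H fin_G hom_f surj_f sep.
  assert (sep_out : forall a, ~ H a -> exists i, forall h, H h -> f i a <> f i h).
  { intros a nHa. destruct (sep (a :: nil) nil) as [i [sep_a _]].
    - intros a' [<-|[]]. exact nHa.
    - intros h [].
    - exists i. apply sep_a. left. reflexivity. }
  split; [split|].
  - intro i. split; [apply kernel_normal | apply kernel_finite_index]; auto.
  - intros a ker_a. apply NNPP. intro ne. destruct (classic (H a)) as [Ha|nHa].
    + destruct (sep nil (a :: gone :: nil)) as [i [_ sep_a]].
      * intros _ [].
      * intros h [<-|[<-|[]]]; [exact Ha | apply sub_H].
      * apply (sep_a a gone); [left; reflexivity | right; left; reflexivity | exact ne |].
        rewrite (ker_a i), hom_one by apply hom_f. reflexivity.
    + destruct (sep_out a nHa) as [i sep_a]. apply (sep_a gone); [apply sub_H|].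
      rewrite (ker_a i), hom_one by apply hom_f. reflexivity.
  - intro a. split.
    + intro prod_a. apply NNPP. intro nHa. destruct (sep_out a nHa) as [i sep_a].
      destruct (prod_a i) as (h & n & Hh & Hn & ->).
      apply (sep_a h Hh). rewrite hom_f, Hn, gmul1r. reflexivity.
    + intros Ha i. exists a, gone. split; [exact Ha|]. split.
      * apply hom_one, hom_f.
      * symmetry. apply gmul1r.
Qed.

Lemma compatible_at_kernels {A B : group} (H : A -> Prop) (K : B -> Prop) (phi : A -> B)
  (q : compatible_quotient H K phi) :
  subgroup_iso H K phi ->
  compatible_at H K phi (fun a => cq_projA q a = gone) (fun b => cq_projB q b = gone).
Proof.
  intros (_ & phi_mul & _ & _).
  destruct q as [GA GB pA pB psi ? ? hom_A ? hom_B ? psi_proj ? psi_inj psi_surj]; simpl.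
  split; [|split; [|split]].
  - intros h h' Hh Hh' E. apply hom_eq_iff in E; [|exact hom_A].
    apply hom_eq_iff; [exact hom_B|]. rewrite <- !psi_proj by assumption. rewrite E. reflexivity.
  - intros h h' Hh Hh'. rewrite phi_mul by assumption. apply same_coset_refl, (kernel_normal hom_B).
  - intros h h' Hh Hh' E. apply hom_eq_iff in E; [|exact hom_B].
    apply hom_eq_iff; [exact hom_A|]. apply psi_inj; try assumption.
    rewrite !psi_proj by assumption. exact E.
  - intros k Hk. destruct (psi_surj k Hk) as [h [Hh E]].
    exists h. split; [exact Hh|]. apply hom_eq_iff; [exact hom_B|].
    rewrite <- psi_proj by assumption. exact E.
Qed.

Lemma filtrations_of_compatible_quotients {A B : group} (H : A -> Prop) (K : B -> Prop)
  (phi : A -> B) :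
  subgroup H -> subgroup K -> subgroup_iso H K phi ->
  (forall as_ bs hs ks,
     (forall a, In a as_ -> ~ H a) -> (forall b, In b bs -> ~ K b) ->
     (forall h, In h hs -> H h) -> (forall k, In k ks -> K k) ->
     exists q : compatible_quotient H K phi,
       separates H (cq_projA q) as_ hs /\ separates K (cq_projB q) bs ks) ->
  exists (Lam : Type) (NA : Lam -> A -> Prop) (NB : Lam -> B -> Prop),
    H_filtration H NA /\ H_filtration K NB /\ compatible H K phi NA NB.
Proof.
  intros sub_H sub_K iso sep.
  exists (compatible_quotient H K phi),
    (fun q a => cq_projA q a = gone), (fun q b => cq_projB q b = gone).
  split; [|split].
  - apply H_filtration_of_kernels;
      [exact sub_H | apply cq_finiteA | apply cq_homA | apply cq_surjA |].
    intros as_ hs not_H in_H.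
    destruct (sep as_ nil hs nil) as [q [sep_A _]]; try (intros ? []); try assumption.
    exists q. exact sep_A.
  - apply H_filtration_of_kernels;
      [exact sub_K | apply cq_finiteB | apply cq_homB | apply cq_surjB |].
    intros bs ks not_K in_K.
    destruct (sep nil bs nil ks) as [q [_ sep_B]]; try (intros ? []); try assumption.
    exists q. exact sep_B.
  - intro q. apply compatible_at_kernels, iso.
Qed.
Theorem proposition3p2 (A B : group) (H : A -> Prop) (K : B -> Prop)
  (phi : A -> B) (HH : subgroup H) (HK : subgroup K)
  (Hphi : subgroup_iso H K phi) :
  (exists (Lam : Type) (NA : Lam -> A -> Prop) (NB : Lam -> B -> Prop),
      H_filtration H NA /\ H_filtration K NB /\ compatible H K phi NA NB)
  <->
  (forall (as_ : list A) (bs : list B) (hs : list A) (ks : list B),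
     (forall a, In a as_ -> ~ H a) ->
     (forall b, In b bs -> ~ K b) ->
     (forall h, In h hs -> H h) ->
     (forall k, In k ks -> K k) ->
     exists (GA GB : group) (fA : A -> GA) (fB : B -> GB) (psi : GA -> GB),
       finite_group GA /\ finite_group GB /\
       group_hom fA /\ (forall y : GA, exists a, fA a = y) /\
       group_hom fB /\ (forall y : GB, exists b, fB b = y) /\
       (* f^A(h) |-> f^B(phi h) is a well-defined isomorphism f^A(H) -> f^B(K) *)
       (forall h, H h -> psi (fA h) = fB (phi h)) /\
       (forall h h', H h -> H h' ->
          psi (gmul (fA h) (fA h')) = gmul (psi (fA h)) (psi (fA h'))) /\
       (forall h h', H h -> H h' -> psi (fA h) = psi (fA h') -> fA h = fA h') /\
       (forall k, K k -> exists h, H h /\ psi (fA h) = fB k) /\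
       (forall a, In a as_ -> forall h, H h -> fA a <> fA h) /\
       (forall b, In b bs -> forall k, K k -> fB b <> fB k) /\
       (forall h h', In h hs -> In h' hs -> h <> h' -> fA h <> fA h') /\
       (forall k k', In k ks -> In k' ks -> k <> k' -> fB k <> fB k')).
Proof.
  split.
  - intros (Lam & NA & NB & filt_A & filt_B & compat) as_ bs hs ks not_H not_K _ _.
    destruct (compatible_quotient_of_filtrations H K phi NA NB HH Hphi filt_A filt_B compat
                as_ bs hs ks not_H not_K) as [q [sep_A sep_B]].
    exists (cqA q), (cqB q), (cq_projA q), (cq_projB q), (cq_iso q).
    destruct q, sep_A, sep_B; simpl in *. repeat split; assumption.
  - intro sep. apply filtrations_of_compatible_quotients; try assumption.
    intros as_ bs hs ks not_H not_K in_H in_K.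
    destruct (sep as_ bs hs ks not_H not_K in_H in_K) as (GA & GB & fA & fB & psi & props).
    decompose [and] props.
    unshelve refine (ex_intro _ (Build_compatible_quotient _ _ H K phi GA GB fA fB psi
                                   _ _ _ _ _ _ _ _ _ _) _);
      first [assumption | split; split; assumption].
Qed.
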